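(* Let $0<s<\tfrac12$ and $\gamma_1(s)=\frac{1}{2}\left(\frac{2^{1-2s}-1}{1-2^{-2s}}\right)$. For every $h\in\mathcal{H}$: (a) $\operatorname{Var}|h|^2=\tfrac{1}{12}|I(h)|^2$; (b) $\mathcal{Q}^\delta_s(h)=\gamma_1(s)\,|I(h)|^{2s}$.
   Context: Let $\mathbb{R}^+=(0,\infty)$. Dyadic intervals. $\mathcal{D}$ is the family of dyadic intervals $I^j_k=(k2^{-j},(k+1)2^{-j}]$ with $j\in\mathbb{Z}$ and $k$ a nonnegative integer. Dyadic distance. $\delta(x,y)=\inf\{|I|:I\in\mathcal{D},\ x,y\in I\}$ for $x,y\in\mathbb{R}^+$. Haar system. $\mathcal{H}$ consists of the functions $h_I(x)=2^{j/2}h(2^jx-k)$ for $I=I^j_k\in\mathcal{D}$, where $h=\chi_{(0,1/2]}-\chi_{(1/2,1]}$. For $h=h_I$ write $I(h)=I$. Variance. For $f\ge0$ on $\mathbb{R}$, $\operatorname{Var}f=\inf_{a\in\mathbb{R}}\int_{\mathbb{R}}(x-a)^2f(x)\,dx$. Here $|h|^2$ is extended by zero outside $\mathbb{R}^+$. Position form. $\mathcal{Q}^\delta_s(\varphi)=\iint_{(\mathbb{R}^+)^2}\delta(x,y)^{2s}\varphi(x)\overline{\varphi(y)}\,\frac{dx\,dy}{\delta(x,y)}$. *)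

From HB Require Import structures.
From mathcomp Require Import all_boot all_order all_algebra.
From mathcomp Require Import all_classical all_reals all_analysis.
Set Implicit Arguments. Unset Strict Implicit. Unset Printing Implicit Defensive.
Import Order.TTheory GRing.Theory Num.Theory.
Import numFieldNormedType.Exports.
Local Open Scope classical_set_scope.
Local Open Scope ring_scope.

Definition dyadic_itv {R : realType} (j : int) (k : nat) : set R :=
  [set x : R | k%:R * (2:R) ^ (- j) < x /\ x <= k.+1%:R * (2:R) ^ (- j)].

Definition dyadic_len {R : realType} (j : int) : R := (2:R) ^ (- j).

Definition ddist {R : realType} (x y : R) : R :=
  inf [set dyadic_len j | j in
        [set j : int | exists k : nat, dyadic_itv j k x /\ dyadic_itv j k y]].

Definition haar0 {R : realType} (t : R) : R :=
  if (0 < t) && (t <= 2^-1) then 1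
  else if (2^-1 < t) && (t <= 1) then -1 else 0.

Definition haar {R : realType} (j : int) (k : nat) (x : R) : R :=
  Num.sqrt ((2:R) ^ j) * haar0 ((2:R) ^ j * x - k%:R).

Definition Var_dens {R : realType} (f : R -> R) : \bar R :=
  ereal_inf (range (fun a : R =>
    (\int[@lebesgue_measure R]_x (((x - a) ^+ 2 * f x)%R)%:E)%E)).

Definition Qdelta {R : realType} (s : R) (phi : R -> R) : \bar R :=
  (\int[(@lebesgue_measure R) \x (@lebesgue_measure R)]_(z in
      [set z : R * R | (0 < z.1)%R /\ (0 < z.2)%R])
     ((ddist z.1 z.2 `^ (2 * s) * phi z.1 * phi z.2 / ddist z.1 z.2)%R)%:E)%E.

Definition gamma1 {R : realType} (s : R) : R :=
  2^-1 * ((2 `^ (1 - 2 * s) - 1) / (1 - 2 `^ (- (2 * s)))).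

(* The square of h_I is 2^j times the indicator of I = I^j_k, so (a) is the
   variance of the uniform distribution on I, computed with the fundamental
   theorem of calculus.
   For (b), the integrand vanishes outside I x I and on the diagonal; the rest
   of I x I is partitioned according to the level at which x and y separate.
   The pairs lying in two sibling dyadic subintervals of length |I| 2^-(m+1)
   have delta(x, y) = |I| 2^-m and h(x) h(y) = -2^j for m = 0 (the two halves
   of I) and 2^j for m > 0, and they form a set of measure |I|^2 2^-(m+1).
   Hence the positive part of the integrand integrates to a geometric series
   of ratio 2^-2s, the negative part to |I|^2s / 2, and their difference is
   gamma1(s) |I|^2s. *)

From Pilot Require Import Defs.
From HB Require Import structures.
From mathcomp Require Import all_boot all_order all_algebra.
From mathcomp Require Import all_classical all_reals all_analysis.
From mathcomp Require Import measurable_realfun.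
From mathcomp Require Import zify ring lra.
Import Order.TTheory GRing.Theory Num.Theory.
Import numFieldNormedType.Exports.
Local Open Scope classical_set_scope.
Local Open Scope ring_scope.
Set Implicit Arguments. Unset Strict Implicit.

(* The analysis library has its own [dyadic_itv]. *)
Local Notation dyadic_itv := Pilot.Defs.dyadic_itv.

Section DyadicIntervals.
Variable R : realType.
Implicit Types (x y : R) (n : int) (k p q : nat).

Lemma pow2z_gt0 n : 0 < (2:R) ^ n.
Proof. exact: exprz_gt0. Qed.

Lemma pow2zS n : (2:R) ^ (n + 1) = 2 * 2 ^ n.
Proof. by rewrite expfzDr // expr1z mulrC. Qed.

Lemma natr_double k : (k.*2%:R : R) = 2 * k%:R.
Proof. by rewrite -muln2 natrM mulrC. Qed.

Lemma addz_natS n (m : nat) : n + m.+1%:Z = n + m%:Z + 1.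
Proof. by rewrite -addn1 PoszD addrA. Qed.

Lemma dyadic_itvE n k x :
  dyadic_itv n k x <-> k%:R < (2:R) ^ n * x /\ (2:R) ^ n * x <= k%:R + 1.
Proof.
rewrite /Pilot.Defs.dyadic_itv /= -!invr_expz ltr_pdivrMr ?pow2z_gt0 //.
by rewrite ler_pdivlMr ?pow2z_gt0 // (mulrC x) natr1.
Qed.

Lemma dyadic_itv_gt0 n k x : dyadic_itv n k x -> 0 < x.
Proof.
move=> /dyadic_itvE [+ _] => /(le_lt_trans (ler0n _ k)).
by rewrite pmulr_rgt0 ?pow2z_gt0.
Qed.

Lemma dyadic_itv_inj n p q x : dyadic_itv n p x -> dyadic_itv n q x -> p = q.
Proof.
move=> /dyadic_itvE [hp1 hp2] /dyadic_itvE [hq1 hq2].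
apply/eqP; rewrite eqn_leq -[(p <= q)%N]ltnS -[(q <= p)%N]ltnS -!(ltr_nat R) -!natr1.
by rewrite (lt_le_trans hp1 hq2) (lt_le_trans hq1 hp2).
Qed.

Lemma dyadic_itv_parent n k x : dyadic_itv (n + 1) k x -> dyadic_itv n (k %/ 2) x.
Proof.
rewrite !dyadic_itvE pow2zS -mulrA.
rewrite {1 2}(divn_eq k 2) natrD natrM.
have : ((k %% 2)%:R : R) <= 1%:R by rewrite ler_nat -ltnS ltn_mod.
by have := ler0n R (k %% 2); lra.
Qed.

Lemma dyadic_itv_children n q x : dyadic_itv n q x ->
  dyadic_itv (n + 1) q.*2 x \/ dyadic_itv (n + 1) q.*2.+1 x.
Proof.
rewrite !dyadic_itvE pow2zS -mulrA -[q.*2.+1%:R]natr1 natr_double.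
by case: (lerP (2 * (2 ^ n * x)) (2 * q%:R + 1)) => h; [left|right]; lra.
Qed.

Lemma dyadic_itv_ancestor n (m : nat) k x :
  dyadic_itv (n + m%:Z) k x -> dyadic_itv n (k %/ 2 ^ m) x.
Proof.
elim: m k => [|m IH] k; first by rewrite addr0 expn0 divn1.
by rewrite addz_natS => /dyadic_itv_parent /IH; rewrite -divnMA -expnS.
Qed.

Lemma dyadic_itv_descendant n k x (m : nat) :
  dyadic_itv n k x -> exists q, dyadic_itv (n + m%:Z) q x.
Proof.
move=> hx; elim: m => [|m [q hq]]; first by exists k; rewrite addr0.
by rewrite addz_natS; case: (dyadic_itv_children hq) => h; eexists; exact: h.
Qed.

Definition same_dyadic n x y := exists k, dyadic_itv n k x /\ dyadic_itv n k y.

Lemma same_dyadic_coarser n (m : nat) x y :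
  same_dyadic (n + m%:Z) x y -> same_dyadic n x y.
Proof.
by move=> [q [hx hy]]; exists (q %/ 2 ^ m)%N; split; apply: dyadic_itv_ancestor.
Qed.

Lemma dyadic_itv_itv n p :
  dyadic_itv n p = `]p%:R * (2:R) ^ (- n), p.+1%:R * 2 ^ (- n)]%classic.
Proof. by rewrite set_itvoc; apply/seteqP; split => x /andP. Qed.

Lemma dyadic_itv_measurable n p : measurable (dyadic_itv n p : set R).
Proof. by rewrite dyadic_itv_itv; exact: measurable_itv. Qed.

Lemma lebesgue_measure_dyadic_itv n p :
  lebesgue_measure (dyadic_itv n p : set R) = (dyadic_len n)%:E.
Proof.
rewrite dyadic_itv_itv lebesgue_measure_itv /= lte_fin ltr_pM2r ?pow2z_gt0 //.
by rewrite ltr_nat ltnSn -EFinB -natr1 /dyadic_len; congr (_%:E); ring.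
Qed.

End DyadicIntervals.

Definition sibling (p : nat) : nat := if odd p then p.-1 else p.+1.

Lemma sibling_half p : (sibling p %/ 2)%N = (p %/ 2)%N.
Proof. by rewrite /sibling; case: ifP => h; lia. Qed.

Lemma sibling_neq p : sibling p <> p.
Proof. by rewrite /sibling; case: ifP => h; lia. Qed.

Lemma sibling_of_children (R : realType) (n : int) (q a b : nat) (x y : R) :
  dyadic_itv n q x -> dyadic_itv n q y ->
  dyadic_itv (n + 1) a x -> dyadic_itv (n + 1) b y -> a != b -> b = sibling a.
Proof.
move=> hx hy ha hb; have /dyadic_itv_inj/(_ hx) ea := dyadic_itv_parent ha.
have /dyadic_itv_inj/(_ hy) eb := dyadic_itv_parent hb.
by rewrite /sibling; case: ifP => oa; lia.
Qed.

Section DyadicDistance.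
Variable R : realType.
Implicit Types (x y : R) (n : int) (k : nat).

Lemma dyadic_len_addn n (m : nat) : dyadic_len (n + m%:Z) = dyadic_len n / 2 ^+ m :> R.
Proof. by rewrite /dyadic_len opprD expfzDr // -[2 ^ (- m%:Z)]invr_expz. Qed.

Lemma dyadic_lenV n : (dyadic_len n)^-1 = (2:R) ^ n.
Proof. by rewrite /dyadic_len -invr_expz invrK. Qed.

Lemma same_dyadic_dist n x y : same_dyadic n x y -> `|x - y| < dyadic_len n.
Proof.
move=> [q [/dyadic_itvE [hx1 hx2] /dyadic_itvE [hy1 hy2]]].
have : `|2 ^ n * x - 2 ^ n * y| < 1 by rewrite ltr_norml; apply/andP; split; lra.
rewrite -mulrBr normrM gtr0_norm ?pow2z_gt0 // -ltr_pdivlMl ?pow2z_gt0 //.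
by rewrite mulr1 invr_expz.
Qed.

Lemma exists_halvings_lt (c e : R) : 0 < e -> exists m : nat, c / 2 ^+ m < e.
Proof.
move=> e0; have half_lt1 : `|2^-1 : R| < 1 by rewrite ger0_norm ?invf_lt1 ?ltr1n.
have /cvgrPdist_lt/(_ e e0) := cvg_geometric c half_lt1.
move=> [N _ /(_ N (leqnn N))]; rewrite /geometric /= sub0r normrN exprVn => h.
by exists N; apply: le_lt_trans h; apply: ler_norm.
Qed.

Lemma ddist_eq n x y : same_dyadic n x y -> ~ same_dyadic (n + 1) x y ->
  ddist x y = dyadic_len n.
Proof.
move=> hn hn1; apply/le_anti/andP; split.
  by apply: ge_inf; [exists 0 => _ [j _ <-]; exact/ltW/pow2z_gt0 | exists n].
apply: lb_le_inf; first by exists (dyadic_len n), n.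
move=> _ [j hj <-]; apply: ler_weXz2l; rewrite ?ler1n // lerN2 leNgt.
apply/negP => lt_nj; apply: hn1.
have [d ej] : exists d : nat, j = n + 1 + d%:Z by exists (absz (j - (n + 1))%R); lia.
by apply: (same_dyadic_coarser (m := d)); rewrite -ej.
Qed.

Lemma ddist_diag n k x : dyadic_itv n k x -> ddist x x = 0.
Proof.
move=> hx.
have lb0 : lbound [set dyadic_len j | j in [set j | same_dyadic j x x]] (0 : R).
  by move=> _ [j _ <-]; exact/ltW/pow2z_gt0.
apply/le_anti/andP; split; last first.
  by apply: lb_le_inf => //; exists (dyadic_len n), n => //; exists k.
rewrite leNgt; apply/negP => ddist_gt0.
have [m hm] := exists_halvings_lt (dyadic_len n) ddist_gt0.
have [q hq] := dyadic_itv_descendant m hx.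
have : ddist x x <= dyadic_len (n + m%:Z).
  by apply: ge_inf; [exists 0 | exists (n + m%:Z) => //; exists q].
by rewrite dyadic_len_addn leNgt hm.
Qed.

Lemma separation_level n x y :
  same_dyadic n x y -> x != y ->
  exists m : nat, same_dyadic (n + m%:Z) x y /\ ~ same_dyadic (n + m%:Z + 1) x y.
Proof.
move=> hn nxy; have [M notM] : exists M : nat, ~ same_dyadic (n + M%:Z) x y.
  have dxy_gt0 : 0 < `|x - y| by rewrite normr_gt0 subr_eq0.
  have [M hM] := exists_halvings_lt (dyadic_len n) dxy_gt0.
  exists M => /same_dyadic_dist; rewrite dyadic_len_addn => /(lt_trans hM).
  by rewrite ltxx.
elim: M notM => [|M IH] notM; first by rewrite addr0 in notM.
have [hM|hM] := pselect (same_dyadic (n + M%:Z) x y); last exact: IH.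
by exists M; rewrite -addz_natS.
Qed.

End DyadicDistance.

Section HaarValues.
Variable R : realType.
Variables (j : int) (k : nat).
Implicit Types (x y : R) (p : nat).

Lemma haar_left x : dyadic_itv (j + 1) k.*2 x -> haar j k x = Num.sqrt (2 ^ j).
Proof.
rewrite dyadic_itvE pow2zS -mulrA natr_double => -[h1 h2].
rewrite /haar /haar0 ifT ?mulr1 //; apply/andP; split; lra.
Qed.

Lemma haar_right x : dyadic_itv (j + 1) k.*2.+1 x -> haar j k x = - Num.sqrt (2 ^ j).
Proof.
rewrite dyadic_itvE pow2zS -mulrA -natr1 natr_double => -[h1 h2].
rewrite /haar /haar0 ifF; last by apply/negbTE/negP => /andP [? ?]; lra.
rewrite ifT ?mulrN1 //; apply/andP; split; lra.
Qed.

Lemma haar_notin x : ~ dyadic_itv j k x -> haar j k x = 0.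
Proof.
move=> /dyadic_itvE hx; rewrite /haar /haar0 ifF; last first.
  by apply/negbTE/negP => /andP [? ?]; apply: hx; split; lra.
by rewrite ifF ?mulr0 //; apply/negbTE/negP => /andP [? ?]; apply: hx; split; lra.
Qed.

Lemma haar_sqr x : dyadic_itv j k x -> haar j k x ^+ 2 = 2 ^ j.
Proof.
move=> /dyadic_itv_children [/haar_left|/haar_right] ->;
  by rewrite ?sqrrN sqr_sqrtr // ltW // pow2z_gt0.
Qed.

Lemma haar_same_child p x y : dyadic_itv j k x ->
  dyadic_itv (j + 1) p x -> dyadic_itv (j + 1) p y -> haar j k x = haar j k y.
Proof.
move=> hk hx hy; have half_p : (p %/ 2)%N = k.
  exact: dyadic_itv_inj (dyadic_itv_parent hx) hk.
have [ep|ep] : p = k.*2 \/ p = k.*2.+1 by lia.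
  by rewrite ep in hx hy; rewrite (haar_left hx) (haar_left hy).
by rewrite ep in hx hy; rewrite (haar_right hx) (haar_right hy).
Qed.

Lemma haar_siblings p x y : dyadic_itv j k x ->
  dyadic_itv (j + 1) p x -> dyadic_itv (j + 1) (sibling p) y ->
  haar j k x * haar j k y = - 2 ^ j.
Proof.
move=> hk hx; have half_p : (p %/ 2)%N = k.
  exact: dyadic_itv_inj (dyadic_itv_parent hx) hk.
have sqrt2j : Num.sqrt (2 ^ j) * Num.sqrt (2 ^ j) = 2 ^ j :> R.
  by rewrite -expr2 sqr_sqrtr // ltW // pow2z_gt0.
have [ep|ep] : p = k.*2 \/ p = k.*2.+1 by lia.
  rewrite ep /sibling odd_double in hx * => /haar_right ->.
  by rewrite (haar_left hx) mulrN sqrt2j.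
rewrite ep /sibling /= odd_double in hx * => /haar_left ->.
by rewrite (haar_right hx) mulNr sqrt2j.
Qed.

End HaarValues.

Section ShiftedSquareIntegral.
Variable R : realType.

Lemma is_derive_continuous (f : R -> R) (x df : R) :
  is_derive x 1 f df -> {for x, continuous f}.
Proof.
by move=> fx; apply/differentiable_continuous/derivable1_diffP; exact: ex_derive.
Qed.

Lemma integral_itv_shifted_sqr (a c lo hi : R) : lo < hi ->
  (\int[lebesgue_measure]_(x in `]lo, hi]) (c * (x - a) ^+ 2)%:E =
   (c / 3 * ((hi - a) ^+ 3 - (lo - a) ^+ 3))%:E)%E.
Proof.
move=> lo_hi.
pose F : R -> R := (c / 3) \*: shift (- a) ^+ 3.
pose f : R -> R := c \*: shift (- a) ^+ 2.
have fE (x : R) : f x = c * (x - a) ^+ 2 by rewrite /f /= /GRing.scale /= exprfctE.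
have dF (x : R) : is_derive x 1 F (f x).
  by apply: is_derive_eq; rewrite fE /= /GRing.scale /= subr0 mulr1; field.
have df (x : R) : is_derive x 1 f (c * (2 * (x - a))).
  by apply: is_derive_eq; rewrite /= /GRing.scale /= subr0 mulr1 expr1; ring.
have cf : continuous f := fun x => is_derive_continuous (df x).
have cF : continuous F := fun x => is_derive_continuous (dF x).
under eq_integral => x _ do rewrite -fE.
rewrite integral_itv_obnd_cbnd; last first.
  apply/measurable_EFinP; apply: (measurable_funS (E := setT)) => //.
  exact: continuous_measurable_fun.
rewrite (@continuous_FTC2 _ f F lo hi lo_hi).
- by rewrite -EFinB /F /= /GRing.scale /= !exprfctE /=; congr (_%:E); ring.
- by apply: continuous_in_subspaceT => x _; apply: cf.
- split; first by move=> x _; have [] := dF x.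
  + by apply: cvg_at_right_filter; apply: cF.
  + by apply: cvg_at_left_filter; apply: cF.
- by move=> x _; rewrite derive1E derive_val.
Qed.

End ShiftedSquareIntegral.

Lemma ereal_inf_range_min (R : realType) (T : Type) (f : T -> \bar R) (t0 : T) :
  (forall t, (f t0 <= f t)%E) -> ereal_inf (range f) = f t0.
Proof.
move=> f_min; apply/le_anti/andP; split; first by apply: ereal_inf_lbound; exists t0.
by apply: le_ereal_inf_tmp => _ [t _ <-]; apply: f_min.
Qed.

Section HaarVariance.
Variable R : realType.
Variables (j : int) (k : nat).
Local Notation ell := (dyadic_len (R:=R) j).

Lemma haar_second_moment (a : R) :
  (\int[lebesgue_measure]_x ((x - a) ^+ 2 * haar j k x ^+ 2)%:E =
   (ell ^+ 2 / 12 + (k%:R * ell + ell / 2 - a) ^+ 2)%:E)%E.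
Proof.
have ell_gt0 : 0 < ell by apply: pow2z_gt0.
rewrite (_ : (fun x => _) = (fun x => (2 ^ j * (x - a) ^+ 2)%:E) \_ (dyadic_itv j k)).
  rewrite -integral_mkcond dyadic_itv_itv integral_itv_shifted_sqr; last first.
    by rewrite ltr_pM2r ?pow2z_gt0 // ltr_nat.
  by rewrite -natr1 -/ell -dyadic_lenV; congr (_%:E); field; rewrite gt_eqF.
apply/funext => x; rewrite patchE; case: (pselect (dyadic_itv j k x)) => hx.
  by rewrite mem_set // haar_sqr // mulrC.
by rewrite memNset // haar_notin // expr0n /= mulr0.
Qed.

Lemma Var_haar : Var_dens (fun x => haar j k x ^+ 2) = (12^-1 * ell ^+ 2)%:E.
Proof.
rewrite /Var_dens (funext haar_second_moment).
rewrite (ereal_inf_range_min (t0 := k%:R * ell + ell / 2)).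
  by rewrite subrr expr0n addr0 mulrC.
by move=> a; rewrite lee_fin subrr expr0n addr0 lerDl sqr_ge0.
Qed.

End HaarVariance.

Section SiblingRectangles.
Variable R : realType.
Implicit Types (n : int) (p q : nat) (z : R * R).
Local Notation mu2 := ((@lebesgue_measure R) \x (@lebesgue_measure R))%E.

Definition sibling_rect n p : set (R * R) :=
  dyadic_itv n p `*` dyadic_itv n (sibling p).

Lemma sibling_rect_parent n p z : sibling_rect (n + 1) p z ->
  dyadic_itv n (p %/ 2) z.1 /\ dyadic_itv n (p %/ 2) z.2.
Proof.
by move=> [/dyadic_itv_parent hx /dyadic_itv_parent hy]; rewrite sibling_half in hy.
Qed.

Lemma sibling_rect_separated n p z : sibling_rect n p z -> ~ same_dyadic n z.1 z.2.
Proof.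
move=> [hx hy] [q [hqx hqy]]; apply: (@sibling_neq p).
by rewrite (dyadic_itv_inj hy hqy) (dyadic_itv_inj hx hqx).
Qed.

Lemma sibling_rect_ddist n p z : sibling_rect (n + 1) p z ->
  ddist z.1 z.2 = dyadic_len n.
Proof.
move=> hz; apply: ddist_eq; last exact: sibling_rect_separated hz.
by exists (p %/ 2)%N; apply: sibling_rect_parent hz.
Qed.

Lemma sibling_rect_index n p q z : sibling_rect n p z -> sibling_rect n q z -> p = q.
Proof. by move=> [hp _] [hq _]; apply: dyadic_itv_inj hp hq. Qed.

Lemma sibling_rect_level n n' p p' z :
  sibling_rect (n + 1) p z -> sibling_rect (n' + 1) p' z -> n = n'.
Proof.
wlog lt_nn' : n n' p p' / n < n'.
  move=> W h h'; case: (ltgtP n n') => [lt_nn'|lt_n'n|//]; first exact: W h h'.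
  by apply/esym; apply: W h' h.
move=> h h'; exfalso; apply: (sibling_rect_separated h).
have [d ed] : exists d : nat, n' = n + 1 + d%:Z by exists (absz (n' - (n + 1))%R); lia.
apply: (same_dyadic_coarser (m := d)); rewrite -ed.
by exists (p' %/ 2)%N; apply: sibling_rect_parent h'.
Qed.

Lemma sibling_rect_measurable n p : measurable (sibling_rect n p).
Proof. by apply: measurableX; apply: dyadic_itv_measurable. Qed.

Lemma sibling_rect_measure n p : mu2 (sibling_rect n p) = (dyadic_len n ^+ 2)%:E.
Proof.
rewrite product_measure1E; [|exact: dyadic_itv_measurable..].
by rewrite expr2 EFinM; congr (_ * _)%E; apply: lebesgue_measure_dyadic_itv.
Qed.

End SiblingRectangles.

Section SplitSets.
Variable R : realType.
Variables (j : int) (k : nat).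
Implicit Types (m r : nat) (z : R * R).
Local Notation mu2 := ((@lebesgue_measure R) \x (@lebesgue_measure R))%E.

(* The children of I^j_k at level j + m + 1 are the indices k 2^(m+1) + r,
   r < 2^(m+1); split_set m is the set of pairs of I^j_k x I^j_k that separate
   exactly at that level. *)
Definition split_set m : set (R * R) :=
  \big[setU/set0]_(r < 2 ^ m.+1) sibling_rect (j + m%:Z + 1) (k * 2 ^ m.+1 + r).

Lemma split_setP m z : split_set m z <->
  exists2 r, (r < 2 ^ m.+1)%N & sibling_rect (j + m%:Z + 1) (k * 2 ^ m.+1 + r) z.
Proof.
rewrite /split_set -(bigcup_mkord _ (fun r => sibling_rect _ (k * 2 ^ m.+1 + r))).
by split => -[r hr hz]; exists r.
Qed.

Lemma split_set_sub m z : split_set m z -> dyadic_itv j k z.1 /\ dyadic_itv j k z.2.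
Proof.
move=> /split_setP [r hr /sibling_rect_parent [hx hy]].
have idx : ((k * 2 ^ m.+1 + r) %/ 2 %/ 2 ^ m)%N = k.
  by rewrite -divnMA -expnS divnMDl ?expn_gt0 // divn_small // addn0.
by rewrite -idx; split; apply: dyadic_itv_ancestor.
Qed.

Lemma split_set_ddist m z : split_set m z -> ddist z.1 z.2 = dyadic_len (j + m%:Z).
Proof. by move=> /split_setP [r _ /sibling_rect_ddist]. Qed.

Lemma split_set0_haar z : split_set 0 z -> haar j k z.1 * haar j k z.2 = - 2 ^ j.
Proof.
move=> hz; have [hx _] := split_set_sub hz.
move: hz => /split_setP [r _ [hrx hry]]; rewrite addr0 in hrx hry.
exact: haar_siblings hx hrx hry.
Qed.

Lemma split_setS_haar m z : split_set m.+1 z -> haar j k z.1 * haar j k z.2 = 2 ^ j.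
Proof.
move=> hz; have [hx hy] := split_set_sub hz.
move: hz => /split_setP [r _ /sibling_rect_parent [hrx hry]].
have lvl : j + m.+1%:Z = j + 1 + m%:Z by lia.
rewrite lvl in hrx hry.
move: (dyadic_itv_ancestor hrx) (dyadic_itv_ancestor hry) => hpx hpy.
by rewrite -(haar_same_child hx hpx hpy) -expr2 haar_sqr.
Qed.

Lemma split_set_measurable m : measurable (split_set m).
Proof. by apply: bigsetU_measurable => r _; apply: sibling_rect_measurable. Qed.

Lemma split_set_trivIset : trivIset setT split_set.
Proof.
move=> m m' _ _ [z [/split_setP [r _ hz] /split_setP [r' _ hz']]].
by have := sibling_rect_level hz hz'; lia.
Qed.

Lemma split_set_measure m :
  mu2 (split_set m) = (dyadic_len (j + m%:Z + 1) ^+ 2 *+ 2 ^ m.+1)%:E.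
Proof.
have := measure_semi_additive (s := mu2)
  (fun r => sibling_rect (j + m%:Z + 1) (k * 2 ^ m.+1 + r)) (2 ^ m.+1)%N.
rewrite /split_set => ->.
- rewrite (eq_bigr (fun=> (dyadic_len (j + m%:Z + 1) ^+ 2)%:E)); last first.
    by move=> r _; apply: sibling_rect_measure.
  by rewrite sumEFin sumr_const card_ord.
- by move=> r; apply: sibling_rect_measurable.
- by move=> a b _ _ [z [ha hb]]; have := sibling_rect_index ha hb; lia.
- by apply: bigsetU_measurable => r _; apply: sibling_rect_measurable.
Qed.

Lemma split_set_cover x y : dyadic_itv j k x -> dyadic_itv j k y -> x != y ->
  exists m, split_set m (x, y).
Proof.
move=> hx hy nxy.
have [m [[q [hqx hqy]] sep]] := separation_level (ex_intro _ k (conj hx hy)) nxy.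
have [a ha] := dyadic_itv_descendant 1 hqx.
have [b hb] := dyadic_itv_descendant 1 hqy.
have nab : a != b by apply/eqP => eab; apply: sep; exists a; rewrite eab in ha *.
have eb := sibling_of_children hqx hqy ha hb nab.
have idx : (a %/ 2 ^ m.+1)%N = k.
  rewrite expnS divnMA (dyadic_itv_inj (dyadic_itv_parent ha) hqx).
  exact: dyadic_itv_inj (dyadic_itv_ancestor hqx) hx.
exists m; apply/split_setP; exists (a %% 2 ^ m.+1)%N; first by rewrite ltn_mod expn_gt0.
by rewrite -idx -divn_eq; split => //; rewrite -eb.
Qed.

End SplitSets.

Section PiecewiseConstantIntegral.
Context d (T : measurableType d) (R : realType) (mu : {measure set T -> \bar R}).
Local Open Scope ereal_scope.

Lemma integral_restrict (D U : set T) (g : T -> \bar R) :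
  U `<=` D -> (forall z, D z -> ~ U z -> g z = 0) ->
  \int[mu]_(z in D) g z = \int[mu]_(z in U) g z.
Proof.
move=> UD g0; rewrite integral_mkcond [RHS]integral_mkcond.
apply: eq_integral => z _; rewrite !patchE.
case: ifPn => [/set_mem zD|zD]; case: ifPn => [/set_mem zU|zU] //.
- by rewrite g0 // => /mem_set; rewrite (negbTE zU).
- by move: zD; rewrite (mem_set (UD _ zU)).
Qed.

Lemma integral_cst_on (D A : set T) (g : T -> \bar R) (c : \bar R) :
  measurable A -> A `<=` D -> (forall z, A z -> g z = c) ->
  (forall z, D z -> ~ A z -> g z = 0) ->
  \int[mu]_(z in D) g z = c * mu A.
Proof.
move=> mA AD gA g0; rewrite (integral_restrict AD g0) -(integral_cst mu mA).
by apply: eq_integral => z /set_mem /gA ->.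
Qed.

Lemma ge0_integral_piecewise_cst (D : set T) (A : nat -> set T)
    (g : T -> \bar R) (c : nat -> \bar R) :
  (forall m, measurable (A m)) -> (forall m, A m `<=` D) -> trivIset setT A ->
  (forall m, 0 <= c m) -> (forall m z, A m z -> g z = c m) ->
  (forall z, D z -> ~ (\bigcup_m A m) z -> g z = 0) ->
  \int[mu]_(z in D) g z = \sum_(m <oo) c m * mu (A m).
Proof.
move=> mA AD tA c0 gA g0.
rewrite (integral_restrict (U := \bigcup_m A m)) //; last by move=> z [m _ /AD].
rewrite ge0_integral_bigcup //.
- apply: eq_eseriesr => m _; rewrite -integral_cst //.
  by apply: eq_integral => z /set_mem /gA ->.
- apply/measurable_fun_bigcup => // m.
  apply: (eq_measurable_fun (cst (c m))); last exact: measurable_cst.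
  by move=> z /set_mem /gA ->.
- by move=> z [m _ /gA ->].
Qed.

End PiecewiseConstantIntegral.

Lemma eseries_geometric (R : realType) (a z : R) : `|z| < 1 ->
  (\sum_(m <oo) (a * z ^+ m)%:E = (a / (1 - z))%:E)%E.
Proof.
move=> z1; apply: cvg_lim => //; apply: cvg_EFin.
  by apply: nearW => n; rewrite /eseries /= sumEFin.
rewrite [X in X @ _ --> _](_ : _ = series (geometric a z)).
  exact: cvg_geometric_series.
by apply/funext => n; rewrite /= /eseries /= sumEFin.
Qed.

Section DyadicEnergy.
Variable R : realType.
Variables (s : R) (j : int) (k : nat).
Hypothesis s_gt0 : 0 < s.
Implicit Types (m : nat) (z : R * R).
Local Notation mu2 := ((@lebesgue_measure R) \x (@lebesgue_measure R))%E.
Local Notation ell := (dyadic_len (R:=R) j).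
Local Notation ratio := ((2:R) `^ (- (2 * s))).
Local Notation split_set := (@split_set R j k).
Local Notation quadrant := [set z : R * R | 0 < z.1 /\ 0 < z.2].

Definition Qdensity z : R :=
  ddist z.1 z.2 `^ (2 * s) * haar j k z.1 * haar j k z.2 / ddist z.1 z.2.

Definition split_value m : R :=
  dyadic_len (j + m%:Z) `^ (2 * s) * 2 ^ j / dyadic_len (j + m%:Z).

Lemma split_value_gt0 m : 0 < split_value m.
Proof. by rewrite !mulr_gt0 ?invr_gt0 ?powR_gt0 ?pow2z_gt0. Qed.

Lemma Qdensity_split0 z : split_set 0 z -> Qdensity z = - split_value 0.
Proof.
move=> hz; rewrite /Qdensity -[_ * haar j k z.1 * _]mulrA.
rewrite (split_set0_haar hz) (split_set_ddist hz).
by rewrite /split_value mulrN mulNr.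
Qed.

Lemma Qdensity_splitS m z : split_set m.+1 z -> Qdensity z = split_value m.+1.
Proof.
move=> hz; rewrite /Qdensity -[_ * haar j k z.1 * _]mulrA.
by rewrite (split_setS_haar hz) (split_set_ddist hz).
Qed.

Lemma Qdensity_eq0 z : ~ (\bigcup_m split_set m) z -> Qdensity z = 0.
Proof.
case: z => x y /= nsplit.
have [hx|/haar_notin hx] := pselect (dyadic_itv j k x); last first.
  by rewrite /Qdensity /= hx !(mulr0, mul0r).
have [hy|/haar_notin hy] := pselect (dyadic_itv j k y); last first.
  by rewrite /Qdensity /= hy !(mulr0, mul0r).
(* On the diagonal ddist vanishes and the division by 0 yields 0. *)
have [exy|nxy] := eqVneq x y.
  by rewrite /Qdensity /= -exy (ddist_diag hx) invr0 mulr0.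
by exfalso; have [m hm] := split_set_cover hx hy nxy; apply: nsplit; exists m.
Qed.

Lemma split_set_quadrant m : split_set m `<=` quadrant.
Proof. by move=> z /split_set_sub [/dyadic_itv_gt0 ? /dyadic_itv_gt0 ?]. Qed.

Lemma ratio_ge0 : 0 <= ratio.
Proof. exact: powR_ge0. Qed.

Lemma ratio_lt1 : ratio < 1.
Proof.
have two_neq0 : (2:R) != 0 by rewrite pnatr_eq0.
by rewrite /powR (negbTE two_neq0) expR_lt1 mulNr oppr_lt0 !mulr_gt0 ?ln_gt0 ?ltr1n.
Qed.

Lemma split_value_energy m :
  split_value m * (dyadic_len (j + m%:Z + 1) ^+ 2 *+ 2 ^ m.+1) =
  ell `^ (2 * s) * ratio ^+ m / 2.
Proof.
have ell_gt0 : 0 < ell by apply: pow2z_gt0.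
have two_m_gt0 : (0:R) < 2 ^+ m by apply: exprn_gt0.
have pow_len : (ell / 2 ^+ m) `^ (2 * s) = ell `^ (2 * s) * ratio ^+ m.
  rewrite powRM ?invr_ge0 ?exprn_ge0 ?ltW //; congr (_ * _).
  rewrite -powR_invn // -powRrM -powR_mulrn ?powR_ge0 // -powRrM.
  by congr (_ `^ _); ring.
rewrite /split_value -addz_natS !dyadic_len_addn pow_len -dyadic_lenV.
rewrite -[_ *+ (2 ^ m.+1)%N]mulr_natr natrX [(2:R) ^+ m.+1]exprS.
by field; rewrite (gt_eqF ell_gt0) (gt_eqF two_m_gt0).
Qed.

Lemma split_set_energy m :
  ((split_value m)%:E * mu2 (split_set m))%E = (ell `^ (2 * s) * ratio ^+ m / 2)%:E.
Proof. by rewrite split_set_measure -EFinM split_value_energy. Qed.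

Lemma integral_Qdensity_pos :
  (\int[mu2]_(z in quadrant) ((fun z => (Qdensity z)%:E)^\+ z) =
    (ell `^ (2 * s) * ratio / 2 / (1 - ratio))%:E)%E.
Proof.
rewrite (ge0_integral_piecewise_cst mu2 (A := fun m => split_set m.+1)
  (c := fun m => (split_value m.+1)%:E)).
- transitivity (\sum_(m <oo) ((ell `^ (2 * s) * ratio / 2) * ratio ^+ m)%:E)%E.
    apply: eq_eseriesr => m _; apply: etrans (split_set_energy m.+1) _.
    by congr (_%:E); rewrite exprS; ring.
  by apply: eseries_geometric; rewrite ger0_norm ?ratio_ge0 ?ratio_lt1.
- by move=> m; apply: split_set_measurable.
- by move=> m; apply: split_set_quadrant.
- by move=> a b _ _ /(split_set_trivIset I I) [].
- by move=> m; rewrite lee_fin ltW ?split_value_gt0.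
- move=> m z hz; rewrite funeposE /= (Qdensity_splitS hz).
  by apply/max_idPl; rewrite lee_fin ltW ?split_value_gt0.
- move=> z _ nsplit; rewrite funeposE /=.
  have [h0|h0] := pselect (split_set 0 z).
    rewrite (Qdensity_split0 h0); apply/max_idPr.
    by rewrite lee_fin oppr_le0 ltW ?split_value_gt0.
  rewrite Qdensity_eq0 ?maxxx // => -[[|m] _ hm]; first exact: h0.
  by apply: nsplit; exists m.
Qed.

Lemma integral_Qdensity_neg :
  (\int[mu2]_(z in quadrant) ((fun z => (Qdensity z)%:E)^\- z) =
    (ell `^ (2 * s) / 2)%:E)%E.
Proof.
rewrite (integral_cst_on mu2 (A := split_set 0) (c := (split_value 0)%:E)).
- by apply: etrans (split_set_energy 0) _; rewrite expr0 mulr1.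
- exact: split_set_measurable.
- exact: split_set_quadrant.
- move=> z hz; rewrite funenegE /= (Qdensity_split0 hz) opprK.
  by apply/max_idPl; rewrite lee_fin ltW ?split_value_gt0.
- move=> z _ h0; rewrite funenegE /=.
  have [[m hm]|nS] := pselect (exists m, split_set m.+1 z).
    rewrite (Qdensity_splitS hm); apply/max_idPr.
    by rewrite lee_fin oppr_le0 ltW ?split_value_gt0.
  rewrite Qdensity_eq0 ?oppr0 ?maxxx // => -[[|m] _ hm]; first exact: h0.
  by apply: nS; exists m.
Qed.

Lemma Qdelta_haar : Qdelta s (haar j k) = (gamma1 s * ell `^ (2 * s))%:E.
Proof.
rewrite /Qdelta; change (\int[mu2]_(z in quadrant) (Qdensity z)%:E =
  (gamma1 s * ell `^ (2 * s))%:E)%E.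
rewrite integralE integral_Qdensity_pos integral_Qdensity_neg -EFinB /gamma1.
rewrite powRD ?pnatr_eq0 ?implybT // powRr1 //.
have := ratio_lt1; set r := ratio => r_lt1; congr (_%:E).
by field; rewrite subr_eq0 gt_eqF.
Qed.

End DyadicEnergy.

Unset Implicit Arguments.

Theorem lemma2p3 (R : realType) (s : R) (hs0 : 0 < s) (hs1 : s < 2^-1)
  (j : int) (k : nat) :
  Var_dens (fun x : R => (haar j k x) ^+ 2) = (12^-1 * dyadic_len (R:=R) j ^+ 2)%:E /\
  Qdelta s (haar j k) = (gamma1 s * dyadic_len (R:=R) j `^ (2 * s))%:E.
Proof.
by split; [exact: Var_haar | exact: Qdelta_haar].
Qed.
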